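(* Assume the standing hypotheses and definitions in the context. For any $(t_0,x_0)\in\mathbb{R}\times\mathbb{R}^n$, the function $t\mapsto H(t,X(t,t_0,x_0))$ is a solution of the linear system $x'=A(t)x$.
   Context: Standing hypotheses: $A:\mathbb{R}\to\mathbb{R}^{n\times n}$ is continuous and bounded, $T(t,s)$ is the evolution operator of $x'=A(t)x$. $\mu:\mathbb{R}\to(0,\infty)$ is an increasing differentiable growth rate: $\mu(0)=1$, $\lim_{t\to-\infty}\mu(t)=0$, $\lim_{t\to+\infty}\mu(t)=+\infty$. The system $x'=A(t)x$ admits an algebraic dichotomy: projections $P(s)$, $Q(s)=I-P(s)$, constants $K,\alpha>0$ with $T(t,s)P(s)=P(t)T(t,s)$, $\|T(t,s)P(s)\|\le K(\mu(t)/\mu(s))^{-\alpha}$ ($t\ge s$), $\|T(t,s)Q(s)\|\le K(\mu(s)/\mu(t))^{-\alpha}$ ($t\le s$). $f:\mathbb{R}\times\mathbb{R}^n\to\mathbb{R}^n$ is continuous, $\|f(t,x)\|\le\beta\mu'(t)\mu^{-1}(t)$, $\|f(t,x_1)-f(t,x_2)\|\le\gamma\mu'(t)\mu^{-1}(t)\|x_1-x_2\|$ for constants $\beta,\gamma\ge0$, and $6K\gamma\alpha^{-1}<1$. $X(t,\tau,\xi)$ is the solution of $x'=A(t)x+f(t,x)$ with $X(\tau)=\xi$. For each $(\tau,\xi)$, $h(t,(\tau,\xi))$ denotes the unique solution bounded on $\mathbb{R}$ of $Z'=A(t)Z-f(t,X(t,\tau,\xi))$ (it exists and is unique under these hypotheses).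 Define $H(t,x)=x+h(t,(t,x))$. *)

From HB Require Import structures.
From mathcomp Require Import all_boot all_order all_algebra.
From mathcomp Require Import all_classical all_reals all_analysis.
Set Implicit Arguments. Unset Strict Implicit. Unset Printing Implicit Defensive.
Import Order.TTheory GRing.Theory Num.Theory.
Import numFieldNormedType.Exports.
Local Open Scope classical_set_scope.
Local Open Scope ring_scope.

(* Vectors of R^n are column vectors 'cV[R]_n, with MathComp's (sup) norm `|_|. *)

Definition evolution_operator (R : realType) (n : nat)
  (A : R -> 'M[R]_n) (T : R -> R -> 'M[R]_n) : Prop :=
  forall s, T s s = 1%:M /\
    forall t : R, is_derive t (1 : R) (fun u => T u s) (A t *m T t s).

Definition growth_rate (R : realType) (mu : R -> R) : Prop :=
  (forall t, 0 < mu t) /\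
  {homo mu : x y / x < y} /\
  (forall t : R, derivable mu t 1) /\
  mu 0 = 1 /\
  (mu x @[x --> -oo] --> (0 : R)) /\
  (mu x @[x --> +oo] --> +oo).

(* x' = A(t) x admits an algebraic (mu-)dichotomy with projections P,
   Q = I - P, and constants K, alpha > 0; the operator-norm bounds are
   written pointwise on vectors (i.e. w.r.t. the induced operator norm). *)
Definition algebraic_dichotomy (R : realType) (n : nat)
  (T : R -> R -> 'M[R]_n) (mu : R -> R) (P : R -> 'M[R]_n) (K alpha : R) : Prop :=
  0 < K /\ 0 < alpha /\
  (forall s, P s *m P s = P s) /\
  (forall t s, T t s *m P s = P t *m T t s) /\
  (forall t s (v : 'cV[R]_n), s <= t ->
      `|T t s *m P s *m v| <= K * powR (mu t / mu s) (- alpha) * `|v|) /\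
  (forall t s (v : 'cV[R]_n), t <= s ->
      `|T t s *m (1%:M - P s) *m v| <= K * powR (mu s / mu t) (- alpha) * `|v|).

Definition solves (R : realType) (n : nat) (A : R -> 'M[R]_n)
  (g : R -> 'cV[R]_n) (x : R -> 'cV[R]_n) : Prop :=
  forall t : R, is_derive t (1 : R) x (A t *m x t + g t).

(* H(t,x) = x + h(t,(t,x)), with h t tau xi standing for h(t,(tau,xi)). *)
Definition Hmap (R : realType) (n : nat)
  (h : R -> R -> 'cV[R]_n -> 'cV[R]_n) (t : R) (x : 'cV[R]_n) : 'cV[R]_n :=
  x + h t t x.

From HB Require Import structures.
From mathcomp Require Import all_boot all_order all_algebra.
From mathcomp Require Import all_classical all_reals all_analysis.
From mathcomp Require Import ring lra.
Set Implicit Arguments.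
Unset Strict Implicit.
Unset Printing Implicit Defensive.
Import Order.TTheory GRing.Theory Num.Theory.
Import numFieldNormedType.Exports.
Local Open Scope classical_set_scope.
Local Open Scope ring_scope.

(* Along Y(t) = X(t,t0,x0), uniqueness for the Lipschitz system (Gronwall)
   gives the flow property X(s,t,Y(t)) = Y(s).  Hence h(.,(t,Y(t))) and
   h(.,(t0,x0)) solve the same forced linear equation, and their difference
   is a bounded solution of x' = A(t)x.  Under the algebraic dichotomy such a
   solution vanishes: its stable part is bounded by K (mu(s)/mu(t))^alpha with
   s -> -oo, its unstable part by K (mu(t)/mu(s))^alpha with s -> +oo.  So
   H(t,Y(t)) = Y(t) + h(t,(t0,x0)), whose forcing terms f and -f cancel. *)

Section MatrixCalculus.
Context {R : realType}.

Lemma is_derive_mxP m p (F : R -> 'M[R]_(m, p)) (t : R) (dF : 'M[R]_(m, p)) :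
  is_derive t 1 F dF <-> forall i j, is_derive t 1 (fun x => F x i j) (dF i j).
Proof.
split=> [[Fd <-] i j|dFij].
  have Fijd := (derivable_mxP F t 1).1 Fd i j.
  by apply: DeriveDef => //; rewrite derive_mx // mxE.
have Fd : derivable F t 1 by apply/derivable_mxP => i j; case: (dFij i j).
apply: DeriveDef => //; rewrite derive_mx //; apply/matrixP => i j.
by rewrite mxE; case: (dFij i j).
Qed.

Lemma is_derive_mulmxr m p q (F : R -> 'M[R]_(m, p)) (t : R) (dF : 'M[R]_(m, p))
    (B : 'M[R]_(p, q)) :
  is_derive t 1 F dF -> is_derive t 1 (fun x => F x *m B) (dF *m B).
Proof.
move=> /is_derive_mxP dFij; apply/is_derive_mxP => i j.
have -> : (fun x => (F x *m B) i j) = \sum_(k < p) (fun x => F x i k * B k j).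
  by apply/funext => x; rewrite fct_sumE mxE.
rewrite mxE; apply: is_derive_sum => k.
have := is_deriveM (dFij i k) (is_derive_cst (B k j) t 1).
by rewrite scaler0 add0r => /is_derive_eq; apply; rewrite mulrC.
Qed.

Lemma ler_mx_entry_norm m p (B : 'M[R]_(m, p)) i j : `|B i j| <= `|B|.
Proof.
rewrite [leRHS]/Num.Def.normr /= mx_normrE.
exact: (le_bigmax _ (fun ij : 'I_m * 'I_p => `|B ij.1 ij.2|) (i, j)).
Qed.

Lemma mx_norm_le m p (B : 'M[R]_(m, p)) c :
  0 <= c -> (forall i j, `|B i j| <= c) -> `|B| <= c.
Proof.
move=> c0 Bc; rewrite [leLHS]/Num.Def.normr /= mx_normrE.
by apply: bigmax_le => // -[i j] _; apply: Bc.
Qed.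

Lemma norm_mulmx_le m p q (B : 'M[R]_(m, p)) (C : 'M[R]_(p, q)) :
  `|B *m C| <= p%:R * `|B| * `|C|.
Proof.
apply: mx_norm_le => [|i j]; first by rewrite !mulr_ge0.
rewrite mxE; apply: le_trans (ler_norm_sum _ _ _) _.
apply: le_trans (_ : \sum_(k < p) `|B| * `|C| <= _).
  by apply: ler_sum => k _; rewrite normrM ler_pM ?ler_mx_entry_norm.
by rewrite sumr_const card_ord -mulrA mulr_natl.
Qed.

End MatrixCalculus.

Section Gronwall.
Context {R : realType}.

Lemma nonincreasing_derive_le0 (phi dphi : R -> R) :
  (forall x : R, is_derive x 1 phi (dphi x)) -> (forall x, dphi x <= 0) ->
  {homo phi : x y /~ x <= y}.
Proof.
move=> dphiP dphi_le0 y x xy.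
have phid x' : derivable phi x' 1 by case: (dphiP x').
apply: (@ler0_derive1_le_cc R phi x y) => //.
- by move=> z _; rewrite derive1E derive_val.
- by apply: derivable_within_continuous => z _; exact: phid.
- by rewrite in_itv /= lexx xy.
- by rewrite in_itv /= lexx xy.
Qed.

Lemma gronwall_eq0_forward (V dV l dl : R -> R) s :
  (forall t : R, is_derive t 1 V (dV t)) ->
  (forall t : R, is_derive t 1 l (dl t)) -> (forall t, 0 <= V t) ->
  (forall t, dV t <= dl t * V t) -> V s = 0 -> forall t, s <= t -> V t = 0.
Proof.
move=> dVP dlP V_ge0 dV_le Vs0 t st.
pose phi x := V x * expR (- l x).
have dphiP (x : R) : is_derive x 1 phi (expR (- l x) * (dV x - dl x * V x)).
  have dE := is_derive1_comp (is_derive_expR _) (is_deriveN (dlP x)).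
  by apply: is_derive_eq (is_deriveM (dVP x) dE) _; rewrite /GRing.scale /=; ring.
have : phi t <= phi s.
  apply: (nonincreasing_derive_le0 dphiP _ st) => x.
  by rewrite pmulr_rle0 ?expR_gt0 // subr_le0.
rewrite /phi Vs0 mul0r pmulr_lle0 ?expR_gt0 // => Vt_le0.
by apply/eqP; rewrite eq_le Vt_le0 V_ge0.
Qed.

(* The backward half is the forward one for the time-reversed data
   [V (- t)] and [- l (- t)]. *)
Lemma gronwall_eq0 (V dV l dl : R -> R) s :
  (forall t : R, is_derive t 1 V (dV t)) ->
  (forall t : R, is_derive t 1 l (dl t)) -> (forall t, 0 <= V t) ->
  (forall t, `|dV t| <= dl t * V t) -> V s = 0 -> forall t, V t = 0.
Proof.
move=> dVP dlP V_ge0 dV_le Vs0 t.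
have [st|ts] := leP s t.
  apply: gronwall_eq0_forward dVP dlP V_ge0 _ Vs0 t st => x.
  exact: le_trans (ler_norm _) (dV_le x).
rewrite -[t]opprK; apply: (@gronwall_eq0_forward (V \o -%R) (fun x => - dV (- x))
    (fun x => - l (- x)) (fun x => dl (- x)) (- s)) => [x|x|x|x||].
- by apply: is_derive_eq (is_derive1_comp (dVP _) (is_deriveNid _ _)) _; rewrite mulrN1.
- apply: is_derive_eq (is_deriveN (is_derive1_comp (dlP _) (is_deriveNid _ _))) _.
  by rewrite mulrN1 opprK.
- exact: V_ge0.
- by apply: le_trans (dV_le _); rewrite -normrN ler_norm.
- by rewrite /= opprK.
- by rewrite lerN2 ltW.
Qed.

Lemma gronwall_cV_eq0 n (w dw : R -> 'cV[R]_n) (k l : R -> R) s :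
  (forall t : R, is_derive t 1 w (dw t)) ->
  (forall t : R, is_derive t 1 l (k t)) -> (forall t, 0 <= k t) ->
  (forall t, `|dw t| <= k t * `|w t|) -> w s = 0 -> forall t, w t = 0.
Proof.
move=> dwP lP k_ge0 dw_le ws0 t.
(* The sup norm is not differentiable, but the sum of squares of the entries
   is, and it dominates the squared sup norm. *)
pose V x := \sum_(i < n) w x i 0 ^+ 2.
pose dV x := \sum_(i < n) (2 * w x i 0) * dw x i 0.
have dVP (x : R) : is_derive x 1 V (dV x).
  have -> : V = \sum_(i < n) (fun x => w x i 0 ^+ 2).
    by apply/funext => y; rewrite fct_sumE.
  apply: is_derive_sum => i.
  have := is_deriveX 2 ((is_derive_mxP _ _ _).1 (dwP x) i 0).
  by move=> /is_derive_eq; apply; rewrite expr1.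
have nlP (x : R) : is_derive x 1 (fun y => 2 * n%:R * l y) (2 * n%:R * k x).
  exact: (is_deriveZ (2 * n%:R) (lP x)).
have V_ge0 x : 0 <= V x by apply: sumr_ge0 => i _; exact: sqr_ge0.
have normw_le x : `|w x| ^+ 2 <= V x.
  have [->|/mx_norm_neq0 [[i j] wij]] := eqVneq `|w x| 0; first by rewrite expr0n.
  change (mx_norm (w x) ^+ 2 <= V x); rewrite wij real_normK ?num_real //.
  rewrite /V (bigD1 i) //= (ord1 j) lerDl.
  by apply: sumr_ge0 => *; exact: sqr_ge0.
have dV_le x : `|dV x| <= 2 * n%:R * k x * V x.
  apply: le_trans (ler_norm_sum _ _ _) _.
  apply: le_trans (_ : \sum_(i < n) 2 * (k x * `|w x| ^+ 2) <= _).
    apply: ler_sum => i _; rewrite !normrM ger0_norm // -mulrA ler_pM2l // expr2 mulrCA.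
    by rewrite ler_pM ?ler_mx_entry_norm // (le_trans (ler_mx_entry_norm _ _ _)).
  have -> : \sum_(i < n) 2 * (k x * `|w x| ^+ 2) = 2 * n%:R * k x * `|w x| ^+ 2.
    by rewrite sumr_const card_ord -mulr_natr; ring.
  by rewrite ler_wpM2l ?mulr_ge0.
have V0 := gronwall_eq0 dVP nlP V_ge0 dV_le (_ : V s = 0).
apply/eqP; rewrite -normr_eq0 -sqrf_eq0 eq_le sqr_ge0 andbT -(V0 _ t).
  exact: normw_le.
by rewrite /V big1 // => i _; rewrite ws0 mxE expr0n.
Qed.

End Gronwall.

Section LinearSystems.
Context {R : realType} {n : nat} (A : R -> 'M[R]_n).

Lemma solvesD (g1 g2 x1 x2 : R -> 'cV[R]_n) :
  solves A g1 x1 -> solves A g2 x2 ->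
  solves A (fun t => g1 t + g2 t) (fun t => x1 t + x2 t).
Proof.
move=> x1P x2P t; apply: is_derive_eq (is_deriveD (x1P t) (x2P t)) _.
by rewrite mulmxDr addrACA.
Qed.

Lemma solvesB (g1 g2 x1 x2 : R -> 'cV[R]_n) :
  solves A g1 x1 -> solves A g2 x2 ->
  solves A (fun t => g1 t - g2 t) (fun t => x1 t - x2 t).
Proof.
move=> x1P x2P t; apply: is_derive_eq (is_deriveB (x1P t) (x2P t)) _.
by rewrite mulmxBr opprD addrACA.
Qed.

Lemma evolution_operator_solves T s (v : 'cV[R]_n) :
  evolution_operator A T -> solves A (fun=> 0) (fun t => T t s *m v).
Proof.
move=> T_evol t; rewrite addr0 mulmxA.
exact: is_derive_mulmxr ((T_evol s).2 t).
Qed.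

Variable M : R.
Hypothesis normA : forall t, `|A t| <= M.

Lemma solves_uniq (f : R -> 'cV[R]_n -> 'cV[R]_n) (L Lp : R -> R)
    (x y : R -> 'cV[R]_n) s :
  (forall t : R, is_derive t 1 Lp (L t)) -> (forall t, 0 <= L t) ->
  (forall t x1 x2, `|f t x1 - f t x2| <= L t * `|x1 - x2|) ->
  solves A (fun t => f t (x t)) x -> solves A (fun t => f t (y t)) y ->
  x s = y s -> forall t, x t = y t.
Proof.
move=> LpP L_ge0 f_lip xP yP xys t; apply/eqP; rewrite -subr_eq0; apply/eqP.
have M_ge0 : 0 <= M := le_trans (normr_ge0 _) (normA 0).
pose k t := n%:R * M + L t.
have kP (t' : R) : is_derive t' 1 (fun u => n%:R * M * u + Lp u) (k t').
  apply: is_derive_eq (is_deriveD (is_deriveZ (n%:R * M) (is_derive_id t' 1)) (LpP t')) _.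
  by rewrite /k /GRing.scale /= mulr1.
apply: (gronwall_cV_eq0 (solvesB xP yP) kP) (_ : x s - y s = 0) t => [t'|t'|].
- by rewrite addr_ge0 ?mulr_ge0.
- rewrite mulrDl; apply: le_trans (ler_normD _ _) (lerD _ (f_lip _ _ _)).
  by apply: le_trans (norm_mulmx_le _ _) _; rewrite ler_wpM2r // ler_wpM2l.
- by rewrite xys subrr.
Qed.

Lemma solves0_evolution T (Z : R -> 'cV[R]_n) :
  evolution_operator A T -> solves A (fun=> 0) Z ->
  forall t s, Z t = T t s *m Z s.
Proof.
move=> T_evol ZP t s.
apply: (@solves_uniq (fun _ _ => 0) (fun=> 0) (fun=> 0) _ (fun r => T r s *m Z s) s) => //.
- by move=> t' x1 x2; rewrite subrr normr0 mul0r.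
- exact: evolution_operator_solves.
- by rewrite (T_evol s).1 mul1mx.
Qed.

End LinearSystems.

Section GrowthRate.
Context {R : realType} (mu : R -> R).
Hypothesis mu_gr : growth_rate mu.

Lemma growth_rate_derive1_ge0 t : 0 <= derive1 mu t.
Proof.
have [_ [mu_incr [mu_der _]]] := mu_gr.
apply: (@incr_derive1_ge0 _ mu setT) => [x _|x y _ _|]; first exact: mu_der.
  exact: mu_incr.
by rewrite interiorT.
Qed.

Lemma growth_rate_is_derive_ln (t : R) :
  is_derive t 1 (fun u => ln (mu u)) (derive1 mu t / mu t).
Proof.
have [mu_gt0 [_ [mu_der _]]] := mu_gr.
have mu_is_der : is_derive t 1 mu (derive1 mu t).
  by rewrite derive1E; exact: derivableP (mu_der t).
apply: is_derive_eq (is_derive1_comp (is_derive1_ln (mu_gt0 t)) mu_is_der) _.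
by rewrite mulrC.
Qed.

Lemma growth_rate_ratio_ninfty t d :
  0 < d -> exists2 s, s <= t & mu s / mu t <= d.
Proof.
have [mu_gt0 [_ [_ [_ [mu_ninfty _]]]]] := mu_gr; move=> d_gt0.
have : \forall s \near -oo, s <= t /\ `|0 - mu s| < d * mu t.
  near=> s; split; near: s; last exact: cvgr_dist_lt mu_ninfty _ (mulr_gt0 _ _).
  by apply: nbhs_ninfty_le; rewrite num_real.
move=> /filter_ex [s [st mus]]; exists s => //.
by rewrite ler_pdivrMr // ltW // -(gtr0_norm (mu_gt0 s)) -normrN -sub0r.
Unshelve. all: by end_near.
Qed.

Lemma growth_rate_ratio_pinfty t d :
  0 < d -> exists2 s, t <= s & mu t / mu s <= d.
Proof.
have [mu_gt0 [_ [_ [_ [_ mu_pinfty]]]]] := mu_gr; move=> d_gt0.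
have : \forall s \near +oo, t <= s /\ mu t / d <= mu s.
  near=> s; split; near: s; last exact: (cvgryPge _).1 mu_pinfty _.
  by apply: nbhs_pinfty_ge; rewrite num_real.
move=> /filter_ex [s [ts mus]]; exists s => //.
by rewrite ler_pdivrMr // mulrC -ler_pdivrMr.
Unshelve. all: by end_near.
Qed.

End GrowthRate.

Section Dichotomy.
Context {R : realType}.

Lemma powR_divN (x y a : R) : 0 < x -> 0 < y -> powR (x / y) (- a) = powR (y / x) a.
Proof.
by move=> x0 y0; rewrite -mulN1r powRrM powR_inv1 ?divr_ge0 ?ltW // invf_div.
Qed.

Lemma le0_powR_small (c C a : R) : 0 <= C -> 0 < a ->
  (forall d, 0 < d -> exists2 r, 0 <= r <= d & c <= C * powR r a) -> c <= 0.
Proof.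
move=> C_ge0 a_gt0 c_le; apply/ler_addgt0Pr => e e_gt0; rewrite add0r.
have eC_gt0 : 0 < e / (C + 1) by rewrite divr_gt0 // ltr_wpDl.
have [r /andP[r_ge0 r_le] c_le_r] := c_le _ (powR_gt0 (a^-1) eC_gt0).
apply: le_trans c_le_r (le_trans (_ : _ <= C * (e / (C + 1))) _).
  rewrite ler_wpM2l //; apply: le_trans (ge0_ler_powR (ltW a_gt0) _ _ r_le) _.
  - by rewrite nnegrE.
  - by rewrite nnegrE powR_ge0.
  by rewrite -powRrM mulVf ?gt_eqF // powRr1 // ltW.
by rewrite mulrCA ger_pMr // ler_pdivrMr ?mul1r ?lerDl // ltr_wpDl.
Qed.

Lemma dichotomy_bounded_orbit_eq0 n (T : R -> R -> 'M[R]_n) mu P K alpha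
    (Z : R -> 'cV[R]_n) B :
  growth_rate mu -> algebraic_dichotomy T mu P K alpha ->
  (forall t, `|Z t| <= B) -> (forall t s, Z t = T t s *m Z s) ->
  forall t, Z t = 0.
Proof.
move=> mu_gr [K_gt0 [a_gt0 [_ [TP [dichP dichQ]]]]] Z_le Z_orbit t.
have mu_gt0 := mu_gr.1.
have B_ge0 : 0 <= B := le_trans (normr_ge0 _) (Z_le 0).
have KB_ge0 : 0 <= K * B by rewrite mulr_ge0 // ltW.
have stable : `|P t *m Z t| <= 0.
  apply: le0_powR_small KB_ge0 a_gt0 _ => d d_gt0.
  have [s st mus] := growth_rate_ratio_ninfty mu_gr t d_gt0.
  exists (mu s / mu t); first by rewrite mus divr_ge0 // ltW.
  rewrite (Z_orbit t s) mulmxA -TP; apply: le_trans (dichP t s _ st) _.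
  by rewrite powR_divN // mulrAC ler_wpM2r ?powR_ge0 // ler_pM2l.
have unstable : `|(1%:M - P t) *m Z t| <= 0.
  apply: le0_powR_small KB_ge0 a_gt0 _ => d d_gt0.
  have [s ts mus] := growth_rate_ratio_pinfty mu_gr t d_gt0.
  exists (mu t / mu s); first by rewrite mus divr_ge0 // ltW.
  have TQ : (1%:M - P t) *m T t s = T t s *m (1%:M - P s).
    by rewrite mulmxBl mulmxBr mul1mx mulmx1 TP.
  rewrite (Z_orbit t s) mulmxA TQ; apply: le_trans (dichQ t s _ ts) _.
  by rewrite powR_divN // mulrAC ler_wpM2r ?powR_ge0 // ler_pM2l.
have -> : Z t = P t *m Z t + (1%:M - P t) *m Z t by rewrite mulmxBl mul1mx addrC subrK.
by move: stable unstable; rewrite !normr_le0 => /eqP-> /eqP->; rewrite addr0.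
Qed.

Lemma bounded_solution_eq0 n (A : R -> 'M[R]_n) M T mu P K alpha (Z : R -> 'cV[R]_n) :
  (forall t, `|A t| <= M) -> evolution_operator A T -> growth_rate mu ->
  algebraic_dichotomy T mu P K alpha -> solves A (fun=> 0) Z ->
  (exists B, forall t, `|Z t| <= B) -> forall t, Z t = 0.
Proof.
move=> normA T_evol mu_gr dich ZP [B Z_le].
exact: dichotomy_bounded_orbit_eq0 mu_gr dich Z_le (solves0_evolution normA T_evol ZP).
Qed.

End Dichotomy.

Theorem lemma3p5 (R : realType) (n : nat)
  (A : R -> 'M[R]_n) (T : R -> R -> 'M[R]_n) (mu : R -> R)
  (P : R -> 'M[R]_n) (K alpha beta gamma : R)
  (f : R -> 'cV[R]_n -> 'cV[R]_n)
  (X : R -> R -> 'cV[R]_n -> 'cV[R]_n)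
  (h : R -> R -> 'cV[R]_n -> 'cV[R]_n) :
  continuous A ->
  (exists M : R, forall t, `|A t| <= M) ->
  evolution_operator A T ->
  growth_rate mu ->
  algebraic_dichotomy T mu P K alpha ->
  continuous (fun p : R * 'cV[R]_n => f p.1 p.2) ->
  0 <= beta -> 0 <= gamma ->
  (forall t x, `|f t x| <= beta * (derive1 mu t / mu t)) ->
  (forall t x1 x2, `|f t x1 - f t x2| <= gamma * (derive1 mu t / mu t) * `|x1 - x2|) ->
  6 * K * gamma / alpha < 1 ->
  (* X(t,tau,xi) is the solution of x' = A(t)x + f(t,x) with X(tau) = xi *)
  (forall tau xi, X tau tau xi = xi /\
     solves A (fun t => f t (X t tau xi)) (fun t => X t tau xi)) ->
  (* h(t,(tau,xi)) is the (unique) solution bounded on R of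
     Z' = A(t) Z - f(t, X(t,tau,xi)) *)
  (forall tau xi, (exists M : R, forall t, `|h t tau xi| <= M) /\
     solves A (fun t => - f t (X t tau xi)) (fun t => h t tau xi)) ->
  forall (t0 : R) (x0 : 'cV[R]_n),
    solves A (fun _ => 0) (fun t => Hmap h t (X t t0 x0)).
Proof.
(* Continuity, the bound on f and the smallness of K gamma / alpha only serve
   the existence of X and h, which is assumed here. *)
move=> _ [M normA] T_evol mu_gr dich _ _ gamma_ge0 _ f_lip _ Xsol hsol t0 x0.
set Y := fun t => X t t0 x0.
pose L t := gamma * (derive1 mu t / mu t).
have LP (t : R) : is_derive t 1 (fun u => gamma * ln (mu u)) (L t).
  exact: (is_deriveZ gamma (growth_rate_is_derive_ln mu_gr t)).
have L_ge0 t : 0 <= L t.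
  by rewrite mulr_ge0 ?divr_ge0 ?growth_rate_derive1_ge0 // ltW // mu_gr.1.
have flow t s : X s t (Y t) = Y s.
  have := solves_uniq normA LP L_ge0 f_lip (Xsol t (Y t)).2 (Xsol t0 x0).2.
  by apply; exact: (Xsol t (Y t)).1.
have h_flow t s : h s t (Y t) = h s t0 x0.
  have [[B1 hB1] h1P] := hsol t (Y t); have [[B2 hB2] h2P] := hsol t0 x0.
  have ZP := solvesB h1P h2P.
  rewrite (_ : (fun r => _ - _) = fun=> 0) in ZP; last first.
    by apply/funext => r; rewrite flow subrr.
  apply/eqP; rewrite -subr_eq0; apply/eqP.
  apply: (bounded_solution_eq0 normA T_evol mu_gr dich ZP); exists (B1 + B2) => r.
  exact: le_trans (ler_normB _ _) (lerD (hB1 r) (hB2 r)).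
have := solvesD (Xsol t0 x0).2 (hsol t0 x0).2.
rewrite (_ : (fun r => _ + _) = fun=> 0); last by apply/funext => r; rewrite subrr.
by congr solves; apply/funext => r; rewrite /Hmap h_flow.
Qed.
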